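(* Let $\Delta$ be a finite saturated sample set and $\delta$ a $\Delta$-diagram. For every basic term $t$ and every homomorphism $h$ from the term algebra to $\mathbf{W}$, if $h(x)$ strongly extends $D_x(\delta)$ for each variable $x$ occurring in $t$, then $[\![t]\!]_h$ strongly extends $D_t(\delta)$.
   Context: Time warps: join-preserving maps $f\colon\omega^+\to\omega^+$, $\omega^+=\omega\cup\{\omega\}$, ordered pointwise; $p(m)=\bigvee\{k\in\omega\mid k<m\}$; $\mathbf{W}=\langle W,\wedge,\vee,\circ,{}^\star,\mathrm{id}\rangle$ with pointwise meet/join, composition, identity and $f^\star$ the largest time warp $h$ with $f\circ h\le p$; $\mathrm{last}(f)=\min\{m\in\omega^+\mid f(m)=f(\omega)\}$. Terms use $\wedge,\vee,\cdot,{}',1$ (interpreted as $\wedge,\vee,\circ,{}^\star,\mathrm{id}$); basic terms use only variables, $\cdot,{}',1$; $[\![t]\!]_h$ is the value of $t$ under $h$. Samples (formal expressions): $\alpha::=\kappa\mid t[\alpha]\mid \mathrm{suc}(\alpha)\mid\mathrm{last}(t)$ with $\kappa$ a time variable and $t$ a basic term. The relation $\leadsto$: $t[\alpha]\leadsto\alpha$, $\mathrm{suc}(\alpha)\leadsto\alpha$, $t[\alpha]\leadsto t[\mathrm{last}(t)]$, $(tu)[\alpha]\leadsto t[u[\alpha]]$, $t'[\alpha]\leadsto t[t'[\alpha]]$, $t'[\alpha]\leadsto t[\mathrm{suc}(t'[\alpha])]$; a sample set is saturated if closed under $\leadsto$. $S(n)=n+1$ for $n\in\omega$, $S(\omega)=\omega$.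 For saturated $\Delta$, a $\Delta$-diagram is $\delta\colon\Delta\to\omega^+$ such that, whenever the samples mentioned belong to $\Delta$: (1) $\delta(\alpha)\le\delta(\beta)\Rightarrow\delta(t[\alpha])\le\delta(t[\beta])$; (2) $\delta(\alpha)=0\Rightarrow\delta(t[\alpha])=0$; (3) $\delta(\mathrm{suc}(\alpha))=S(\delta(\alpha))$; (4) for $t[\alpha]\in\Delta$: $\delta(\mathrm{last}(t))\le\delta(\alpha)\iff\delta(t[\mathrm{last}(t)])=\delta(t[\alpha])$; (5) $\delta(\mathrm{last}(t))=\omega\Rightarrow\delta(t[\mathrm{last}(t)])=\omega$; (6) $\delta(1[\alpha])=\delta(\alpha)$; (7) $\delta(\mathrm{last}(1))=\omega$; (8) $\delta((tu)[\alpha])=\delta(t[u[\alpha]])$; (9) $\delta(\mathrm{last}(tu))=\omega\Rightarrow\delta(\mathrm{last}(t))=\delta(\mathrm{last}(u))=\omega$; (10) for $t'[\alpha]\in\Delta$: $0<\delta(\alpha)<\omega\Rightarrow\delta(t[t'[\alpha]])<\delta(\alpha)$; (11) for $t'[\alpha]\in\Delta$: $\delta(t'[\alpha])<\omega\Rightarrow\delta(\alpha)\le\delta(t[\mathrm{suc}(t'[\alpha])])$; (12) $\delta(\mathrm{last}(t'))=\omega\Rightarrow\delta(\mathrm{last}(t))=\omega$. For a basic term $t$, $D_t(\delta)=\{(\delta(\alpha),\delta(t[\alpha]))\mid t[\alpha]\in\Delta\}$. A time warp $f$ extends $D_t(\delta)$ if $f(i)=j$ for all $(i,j)\in D_t(\delta)$,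 and strongly extends it if moreover $D_t(\delta)\neq\emptyset$ and $\delta(\mathrm{last}(t))=\omega$ together imply $\mathrm{last}(f)=\omega$. *)

From Stdlib Require Import List ClassicalEpsilon.
Import ListNotations.

(* omega^+ = omega ∪ {omega} *)
Inductive wp : Type := Fin (n : nat) | Om.

Definition wle (a b : wp) : Prop :=
  match a, b with
  | Fin m, Fin n => m <= n
  | _, Om => True
  | Om, Fin _ => False
  end.

Definition wlt (a b : wp) : Prop := wle a b /\ a <> b.

Definition is_sup (S : wp -> Prop) (x : wp) : Prop :=
  (forall y, S y -> wle y x) /\ (forall z, (forall y, S y -> wle y z) -> wle x z).

(* join-preserving maps (preserve all joins, including the empty one) *)
Definition timewarp (f : wp -> wp) : Prop :=
  forall (S : wp -> Prop) x, is_sup S x ->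
    is_sup (fun y => exists z, S z /\ f z = y) (f x).

Definition fle (f g : wp -> wp) : Prop := forall x, wle (f x) (g x).

(* p(m) = join {k in omega | k < m}: p 0 = 0, p (n+1) = n, p omega = omega *)
Definition pw (m : wp) : wp :=
  match m with
  | Fin 0 => Fin 0
  | Fin (S n) => Fin n
  | Om => Om
  end.

Definition wmin (a b : wp) : wp :=
  match a, b with
  | Fin m, Fin n => Fin (Nat.min m n)
  | Fin m, Om => Fin m
  | Om, b => b
  end.

Definition wmax (a b : wp) : wp :=
  match a, b with
  | Fin m, Fin n => Fin (Nat.max m n)
  | Fin _, Om => Om
  | Om, _ => Om
  end.

Definition star (f : wp -> wp) : wp -> wp :=
  epsilon (inhabits (fun x : wp => x))
    (fun h => timewarp h /\ fle (fun x => f (h x)) pw /\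
      forall h', timewarp h' -> fle (fun x => f (h' x)) pw -> fle h' h).

Definition lastw (f : wp -> wp) : wp :=
  epsilon (inhabits Om)
    (fun m => f m = f Om /\ forall k, f k = f Om -> wle m k).

Definition Sw (a : wp) : wp := match a with Fin n => Fin (S n) | Om => Om end.

Inductive term : Type :=
| TVar (x : nat)
| TMeet (t u : term)
| TJoin (t u : term)
| TComp (t u : term)
| TStar (t : term)
| TOne.

Inductive bterm : Type :=
| BVar (x : nat)
| BComp (t u : bterm)
| BStar (t : bterm)
| BOne.

Fixpoint emb (t : bterm) : term :=
  match t with
  | BVar x => TVar x
  | BComp t u => TComp (emb t) (emb u)
  | BStar t => TStar (emb t)
  | BOne => TOne
  end.

(* value of a term under the homomorphism determined by the valuation v *)
Fixpoint eval (v : nat -> wp -> wp) (t : term) : wp -> wp :=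
  match t with
  | TVar x => v x
  | TMeet t u => fun m => wmin (eval v t m) (eval v u m)
  | TJoin t u => fun m => wmax (eval v t m) (eval v u m)
  | TComp t u => fun m => eval v t (eval v u m)
  | TStar t => star (eval v t)
  | TOne => fun m => m
  end.

Fixpoint occurs (x : nat) (t : bterm) : Prop :=
  match t with
  | BVar y => x = y
  | BComp t u => occurs x t \/ occurs x u
  | BStar t => occurs x t
  | BOne => False
  end.

Inductive sample : Type :=
| SVar (k : nat)
| SApp (t : bterm) (a : sample)
| SSuc (a : sample)
| SLast (t : bterm).

Inductive leadsto : sample -> sample -> Prop :=
| ld_app t a : leadsto (SApp t a) a
| ld_suc a : leadsto (SSuc a) a
| ld_last t a : leadsto (SApp t a) (SApp t (SLast t))
| ld_comp t u a : leadsto (SApp (BComp t u) a) (SApp t (SApp u a))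
| ld_star1 t a : leadsto (SApp (BStar t) a) (SApp t (SApp (BStar t) a))
| ld_star2 t a : leadsto (SApp (BStar t) a) (SApp t (SSuc (SApp (BStar t) a))).

Definition saturated (D : list sample) : Prop :=
  forall a b, In a D -> leadsto a b -> In b D.

(* Delta-diagrams: each condition is imposed when all samples mentioned are in D *)
Definition diagram (D : list sample) (d : sample -> wp) : Prop :=
  (* (1) *)
  (forall t a b, In a D -> In b D -> In (SApp t a) D -> In (SApp t b) D ->
     wle (d a) (d b) -> wle (d (SApp t a)) (d (SApp t b))) /\
  (* (2) *)
  (forall t a, In a D -> In (SApp t a) D ->
     d a = Fin 0 -> d (SApp t a) = Fin 0) /\
  (* (3) *)
  (forall a, In a D -> In (SSuc a) D -> d (SSuc a) = Sw (d a)) /\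
  (* (4) *)
  (forall t a, In (SApp t a) D -> In a D -> In (SLast t) D ->
     In (SApp t (SLast t)) D ->
     (wle (d (SLast t)) (d a) <-> d (SApp t (SLast t)) = d (SApp t a))) /\
  (* (5) *)
  (forall t, In (SLast t) D -> In (SApp t (SLast t)) D ->
     d (SLast t) = Om -> d (SApp t (SLast t)) = Om) /\
  (* (6) *)
  (forall a, In a D -> In (SApp BOne a) D -> d (SApp BOne a) = d a) /\
  (* (7) *)
  (In (SLast BOne) D -> d (SLast BOne) = Om) /\
  (* (8) *)
  (forall t u a, In (SApp (BComp t u) a) D -> In (SApp t (SApp u a)) D ->
     d (SApp (BComp t u) a) = d (SApp t (SApp u a))) /\
  (* (9) *)
  (forall t u, In (SLast (BComp t u)) D -> In (SLast t) D -> In (SLast u) D ->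
     d (SLast (BComp t u)) = Om -> d (SLast t) = Om /\ d (SLast u) = Om) /\
  (* (10) *)
  (forall t a, In (SApp (BStar t) a) D -> In a D ->
     In (SApp t (SApp (BStar t) a)) D ->
     wlt (Fin 0) (d a) -> wlt (d a) Om ->
     wlt (d (SApp t (SApp (BStar t) a))) (d a)) /\
  (* (11) *)
  (forall t a, In (SApp (BStar t) a) D -> In a D ->
     In (SApp t (SSuc (SApp (BStar t) a))) D ->
     wlt (d (SApp (BStar t) a)) Om ->
     wle (d a) (d (SApp t (SSuc (SApp (BStar t) a))))) /\
  (* (12) *)
  (forall t, In (SLast (BStar t)) D -> In (SLast t) D ->
     d (SLast (BStar t)) = Om -> d (SLast t) = Om).

(* f extends D_t(d) = {(d a, d (t[a])) | t[a] in D} *)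
Definition extends (f : wp -> wp) (t : bterm) (D : list sample) (d : sample -> wp) : Prop :=
  forall a, In (SApp t a) D -> f (d a) = d (SApp t a).

Definition strongly_extends (f : wp -> wp) (t : bterm) (D : list sample) (d : sample -> wp) : Prop :=
  extends f t D d /\
  ((exists a, In (SApp t a) D) -> d (SLast t) = Om -> lastw f = Om).

From Stdlib Require Import List Classical ClassicalEpsilon Arith Lia.

(* The identity interprets 1; composition is
   handled by conditions (8) and (9), using that a warp with [last] equal to
   omega maps finite values to finite values and omega to omega.  For [t'] and
   [b = t'[a]] with [delta a = j+1], condition (10) gives [f (delta b) <= j], so
   the step function jumping from 0 to [delta b] at [j+1] lies below the
   largest residual [f^star], whence [delta b <= f^star (j+1)]; conversely (11)
   gives [f (delta b + 1) > j], which forbids [f^star (j+1) > delta b].  When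
   [delta a = omega], (11) forces [f (delta b + 1) = omega], which bounds every
   [f^star m] by [delta b], while (4) transfers the lower bound to the sample
   [last(t')]; if that sample is omega, (5) and (12) give [last f = omega],
   and then [f^star omega = omega]. *)

(** * The order on omega^+ *)

Lemma wle_refl a : wle a a.
Proof. destruct a; simpl; auto. Qed.

Lemma wle_trans a b c : wle a b -> wle b c -> wle a c.
Proof. destruct a, b, c; simpl; try lia; tauto. Qed.

Lemma wle_antisym a b : wle a b -> wle b a -> a = b.
Proof. destruct a, b; simpl; try tauto. intros; f_equal; lia. Qed.

Lemma wle_Om a : wle a Om.
Proof. destruct a; exact I. Qed.

Lemma wle_0 a : wle (Fin 0) a.
Proof. destruct a; simpl; auto; lia. Qed.

Lemma Om_wle_eq a : wle Om a -> a = Om.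
Proof. destruct a; simpl; tauto. Qed.

Lemma not_wle_Fin x k : ~ wle x (Fin k) -> wle (Fin (S k)) x.
Proof. destruct x; simpl; auto; lia. Qed.

Lemma wlt_Fin_S x j : wlt x (Fin (S j)) -> wle x (Fin j).
Proof.
  destruct x as [n|]; intros [Hle Hneq]; simpl in Hle; [|contradiction].
  assert (n <> S j) by congruence. simpl; lia.
Qed.

Lemma pw_Fin n : pw (Fin n) = Fin (Nat.pred n).
Proof. destruct n; reflexivity. Qed.

Lemma least_nat (P : nat -> Prop) :
  (exists n, P n) -> exists m, P m /\ forall k, P k -> m <= k.
Proof.
  intro HP.
  destruct (dec_inh_nat_subset_has_unique_least_element P (fun n => classic (P n)) HP)
    as [m [[Pm Hm] _]].
  eauto.
Qed.

Lemma sup_exists (A : wp -> Prop) : exists x, is_sup A x.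
Proof.
  destruct (classic (exists N, forall y, A y -> wle y (Fin N))) as [HN|Hunb].
  - destruct (least_nat _ HN) as [m [Hm Hmin]].
    exists (Fin m); split; [exact Hm|].
    intros [k|] Hk; [apply Hmin, Hk | exact I].
  - exists Om; split; [intros; apply wle_Om|].
    intros [k|] Hk; [|exact I]. exfalso; eauto.
Qed.

(** * Time warps *)

Section TimeWarp.
Variable f : wp -> wp.
Hypothesis Hf : timewarp f.

Lemma timewarp_mono a b : wle a b -> wle (f a) (f b).
Proof.
  intro Hab.
  assert (Hsup : is_sup (fun y => y = a \/ y = b) b).
  { split; [intros y [-> | ->]; auto using wle_refl | intros z Hz; auto]. }
  apply (proj1 (Hf _ _ Hsup)). eauto.
Qed.

Lemma timewarp_0 : f (Fin 0) = Fin 0.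
Proof.
  assert (Hsup : is_sup (fun _ => False) (Fin 0)).
  { split; [tauto | intros; apply wle_0]. }
  apply wle_antisym; [|apply wle_0].
  apply (proj2 (Hf _ _ Hsup)). intros y [z [[] _]].
Qed.

Lemma timewarp_Om_le z : (forall n, wle (f (Fin n)) z) -> wle (f Om) z.
Proof.
  intro Hz.
  assert (Hsup : is_sup (fun y => exists n, y = Fin n) Om).
  { split; [intros; apply wle_Om|].
    intros [k|] Hk; [|exact I]. specialize (Hk (Fin (S k)) (ex_intro _ _ eq_refl)).
    simpl in Hk; lia. }
  apply (proj2 (Hf _ _ Hsup)). intros y [w [[n ->] <-]]. apply Hz.
Qed.

End TimeWarp.

Lemma timewarp_intro h :
  (forall a b, wle a b -> wle (h a) (h b)) -> h (Fin 0) = Fin 0 ->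
  (forall z, (forall n, wle (h (Fin n)) z) -> wle (h Om) z) -> timewarp h.
Proof.
  intros Hmono H0 Hcont A x [Hub Hleast]. split.
  - intros y [z [Az <-]]. apply Hmono, Hub, Az.
  - intros w Hw. destruct (classic (A x)) as [Ax|nAx]; [apply Hw; eauto|].
    destruct x as [[|n]|].
    + rewrite H0; apply wle_0.
    + exfalso.
      assert (Hbelow : forall y, A y -> wle y (Fin n)).
      { intros y Ay. apply wlt_Fin_S. split; [apply Hub, Ay | congruence]. }
      specialize (Hleast _ Hbelow). simpl in Hleast; lia.
    + apply Hcont. intro n.
      destruct (classic (exists y, A y /\ wle (Fin n) y)) as [[y [Ay Hy]]|Hno].
      * apply wle_trans with (h y); auto. apply Hw; eauto.
      * exfalso. apply (Hleast (Fin n)). intros y Ay.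
        destruct (classic (wle y (Fin n))) as [Hle|Hgt]; auto.
        exfalso. apply Hno. exists y. split; [exact Ay|].
        apply wle_trans with (Fin (S n)); [simpl; lia | now apply not_wle_Fin].
Qed.

Lemma timewarp_id : timewarp (fun m => m).
Proof.
  intros A x [Hub Hleast]. split.
  - intros y [z [Az <-]]; auto.
  - intros w Hw. apply Hleast. intros y Ay. apply Hw; eauto.
Qed.

Lemma timewarp_comp f g : timewarp f -> timewarp g -> timewarp (fun m => f (g m)).
Proof.
  intros Hf Hg A x Hx. destruct (Hf _ _ (Hg _ _ Hx)) as [Hub Hleast]. split.
  - intros y [z [Az <-]]. apply Hub. eauto.
  - intros w Hw. apply Hleast. intros y [z [[z' [Az' <-]] <-]]. apply Hw; eauto.
Qed.

(** * The function last *)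

Lemma lastw_spec f : f (lastw f) = f Om /\ forall k, f k = f Om -> wle (lastw f) k.
Proof.
  unfold lastw. apply epsilon_spec.
  destruct (classic (exists n, f (Fin n) = f Om)) as [Hn|Hno].
  - destruct (least_nat _ Hn) as [m [Hm Hmin]].
    exists (Fin m). split; [exact Hm|]. intros [k|] Hk; [apply Hmin, Hk | exact I].
  - exists Om. split; [reflexivity|]. intros [k|] Hk; [exfalso; eauto | exact I].
Qed.

Lemma lastw_Om_iff f : lastw f = Om <-> forall n, f (Fin n) <> f Om.
Proof.
  destruct (lastw_spec f) as [Hlast Hmin]. split.
  - intros E n Hn. specialize (Hmin _ Hn). rewrite E in Hmin. exact Hmin.
  - intro H. destruct (lastw f) as [n|]; [exfalso; eapply H; eauto | reflexivity].
Qed.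

Section LastOmega.
Variable f : wp -> wp.
Hypothesis Hf : timewarp f.
Hypothesis Hlast : lastw f = Om.

Lemma lastw_Om_fix : f Om = Om.
Proof.
  pose proof (proj1 (lastw_Om_iff f) Hlast) as Hneq.
  destruct (f Om) as [[|N]|] eqn:E; [exfalso | exfalso | reflexivity].
  - apply (Hneq 0). now rewrite timewarp_0.
  - assert (Hle : wle (f Om) (Fin N)).
    { apply timewarp_Om_le; [exact Hf|]. intro n. apply wlt_Fin_S. split; [|apply Hneq].
      rewrite <- E. apply timewarp_mono, wle_Om. exact Hf. }
    rewrite E in Hle; simpl in Hle; lia.
Qed.

Lemma lastw_Om_Fin n : exists k, f (Fin n) = Fin k.
Proof.
  pose proof (proj1 (lastw_Om_iff f) Hlast n) as Hn. rewrite lastw_Om_fix in Hn.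
  destruct (f (Fin n)) as [k|]; [eauto | congruence].
Qed.

End LastOmega.

Lemma lastw_id : lastw (fun m => m) = Om.
Proof. apply lastw_Om_iff. discriminate. Qed.

Lemma lastw_comp f g : timewarp g -> lastw f = Om -> lastw g = Om ->
  lastw (fun m => f (g m)) = Om.
Proof.
  intros Hg Hlf Hlg. apply lastw_Om_iff. intro n.
  rewrite (lastw_Om_fix g Hg Hlg). destruct (lastw_Om_Fin g Hg Hlg n) as [k ->].
  exact (proj1 (lastw_Om_iff f) Hlf k).
Qed.

(** * The residual [f^star] *)

Lemma largest_residual_exists f : timewarp f ->
  exists h, timewarp h /\ fle (fun x => f (h x)) pw /\
    forall h', timewarp h' -> fle (fun x => f (h' x)) pw -> fle h' h.
Proof.
  intro Hf.
  set (values x y := exists h, (timewarp h /\ fle (fun x => f (h x)) pw) /\ h x = y).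
  set (h0 x := epsilon (inhabits Om) (is_sup (values x))).
  assert (Hsup : forall x, is_sup (values x) (h0 x)).
  { intro x. apply epsilon_spec, sup_exists. }
  assert (Hbelow : forall h x, timewarp h -> fle (fun x => f (h x)) pw -> wle (h x) (h0 x)).
  { intros h x Hh Hres. apply (proj1 (Hsup x)). exists h; auto. }
  exists h0. split; [|split].
  - apply timewarp_intro.
    + intros a b Hab. apply (proj2 (Hsup a)). intros y [h [[Hh Hres] <-]].
      apply wle_trans with (h b); [apply timewarp_mono|apply Hbelow]; auto.
    + apply wle_antisym; [|apply wle_0]. apply (proj2 (Hsup _)).
      intros y [h [[Hh _] <-]]. rewrite (timewarp_0 h Hh). apply wle_refl.
    + intros z Hz. apply (proj2 (Hsup _)). intros y [h [[Hh Hres] <-]].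
      apply timewarp_Om_le; [exact Hh|]. intro n.
      apply wle_trans with (h0 (Fin n)); auto.
  - intro x. apply (proj2 (Hf _ _ (Hsup x))).
    intros y [z [[h [[Hh Hres] <-]] <-]]. apply Hres.
  - intros h Hh Hres x. auto.
Qed.

Definition step (k : nat) (c : wp) (x : wp) : wp :=
  match x with Fin n => if Nat.leb k n then c else Fin 0 | Om => c end.

Lemma step_timewarp k c : timewarp (step (S k) c).
Proof.
  apply timewarp_intro; [| reflexivity |].
  - intros [n|] [m|] Hnm; simpl in Hnm; unfold step; try contradiction.
    + destruct (Nat.leb_spec (S k) n), (Nat.leb_spec (S k) m);
        auto using wle_refl, wle_0; lia.
    + destruct (Nat.leb (S k) n); auto using wle_refl, wle_0.
    + apply wle_refl.
  - intros z Hz. specialize (Hz (S k)). unfold step in Hz. now rewrite Nat.leb_refl in Hz.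
Qed.

Section Residual.
Variable f : wp -> wp.
Hypothesis Hf : timewarp f.

Lemma star_spec : timewarp (star f) /\ fle (fun x => f (star f x)) pw /\
  forall h, timewarp h -> fle (fun x => f (h x)) pw -> fle h (star f).
Proof. unfold star. apply epsilon_spec, largest_residual_exists, Hf. Qed.

Lemma star_timewarp : timewarp (star f).
Proof. apply star_spec. Qed.

Lemma star_residual x : wle (f (star f x)) (pw x).
Proof. apply star_spec. Qed.

Lemma star_greatest h : timewarp h -> fle (fun x => f (h x)) pw -> fle h (star f).
Proof. apply star_spec. Qed.

Lemma star_ge c j : wle (f c) (Fin j) -> wle c (star f (Fin (S j))).
Proof.
  intro Hc.
  assert (Hres : fle (fun x => f (step (S j) c x)) pw).
  { intros [n|]; unfold step; [|apply wle_Om].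
    destruct (Nat.leb_spec (S j) n).
    - apply wle_trans with (Fin j); [exact Hc|]. rewrite pw_Fin; simpl; lia.
    - rewrite (timewarp_0 f Hf). apply wle_0. }
  pose proof (star_greatest _ (step_timewarp j c) Hres (Fin (S j))) as Hstep.
  unfold step in Hstep. now rewrite Nat.leb_refl in Hstep.
Qed.

Lemma star_le x k : ~ wle (f (Fin (S k))) (pw x) -> wle (star f x) (Fin k).
Proof.
  intro Hk. destruct (classic (wle (star f x) (Fin k))) as [Hle|Hgt]; [exact Hle|].
  exfalso. apply Hk, wle_trans with (f (star f x)).
  - apply timewarp_mono, not_wle_Fin, Hgt. exact Hf.
  - apply star_residual.
Qed.

Hypothesis Hlast : lastw f = Om.

Lemma star_Om : star f Om = Om.
Proof.
  destruct (star f Om) as [K|] eqn:E; [exfalso | reflexivity].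
  destruct (lastw_Om_Fin f Hf Hlast (S K)) as [M HM].
  assert (Hge : wle (Fin (S K)) (star f (Fin (S M)))).
  { apply star_ge. rewrite HM. apply wle_refl. }
  pose proof (timewarp_mono _ star_timewarp _ _ (wle_Om (Fin (S M)))) as Hmono.
  rewrite E in Hmono. pose proof (wle_trans _ _ _ Hge Hmono). simpl in *; lia.
Qed.

Lemma star_Fin_neq_Om n : star f (Fin n) <> Om.
Proof.
  intro E. pose proof (star_residual (Fin n)) as Hres.
  rewrite E, (lastw_Om_fix f Hf Hlast), pw_Fin in Hres. exact Hres.
Qed.

Lemma lastw_star : lastw (star f) = Om.
Proof. apply lastw_Om_iff. intro n. rewrite star_Om. apply star_Fin_neq_Om. Qed.

End Residual.

(** * Diagrams *)

Section Diagram.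
Variables (D : list sample) (d : sample -> wp).
Hypothesis Hs : saturated D.
Hypothesis Hd : diagram D d.

Lemma one_strongly_extends : strongly_extends (fun m => m) BOne D d.
Proof.
  destruct Hd as (_ & _ & _ & _ & _ & d_one & _).
  split; [|intros; apply lastw_id].
  intros a Ha. symmetry. exact (d_one a (Hs _ _ Ha (ld_app _ _)) Ha).
Qed.

Lemma comp_strongly_extends f g t u : timewarp g ->
  strongly_extends f t D d -> strongly_extends g u D d ->
  strongly_extends (fun m => f (g m)) (BComp t u) D d.
Proof.
  intros Hg [Ef Lf] [Eg Lg].
  destruct Hd as (_ & _ & _ & _ & _ & _ & _ & d_comp & d_comp_last & _).
  assert (Hin : forall a, In (SApp (BComp t u) a) D ->
    In (SApp t (SApp u a)) D /\ In (SApp u a) D).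
  { intros a Ha. pose proof (Hs _ _ Ha (ld_comp _ _ _)) as Htu.
    split; [exact Htu | exact (Hs _ _ Htu (ld_app _ _))]. }
  split.
  - intros a Ha. destruct (Hin a Ha) as [Htu Hu].
    rewrite Eg, Ef by assumption. symmetry. apply d_comp; assumption.
  - intros [a Ha] Hlast. destruct (Hin a Ha) as [Htu Hu].
    pose proof (Hs _ _ (Hs _ _ Ha (ld_last _ _)) (ld_app _ _)) as Hl.
    pose proof (Hs _ _ (Hs _ _ Htu (ld_last _ _)) (ld_app _ _)) as Hlt.
    pose proof (Hs _ _ (Hs _ _ Hu (ld_last _ _)) (ld_app _ _)) as Hlu.
    destruct (d_comp_last t u Hl Hlt Hlu Hlast) as [Lt Lu].
    apply lastw_comp; [exact Hg | apply Lf | apply Lg].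
    + exists (SApp u a); exact Htu.
    + exact Lt.
    + exists a; exact Hu.
    + exact Lu.
Qed.

Section Star.
Variables (f : wp -> wp) (t : bterm).
Hypothesis Hf : timewarp f.
Hypothesis Hext : strongly_extends f t D d.

Lemma star_extends_Fin a n : In (SApp (BStar t) a) D -> d a = Fin n ->
  star f (Fin n) = d (SApp (BStar t) a).
Proof.
  intros Ha Hn.
  destruct Hd as (_ & d_zero & d_suc & _ & _ & _ & _ & _ & _ & d_star_below & d_star_above & _).
  pose proof (Hs _ _ Ha (ld_app _ _)) as Ia.
  pose proof (Hs _ _ Ha (ld_star1 _ _)) as Htb.
  pose proof (Hs _ _ Ha (ld_star2 _ _)) as Htsb.
  pose proof (Hs _ _ Htsb (ld_app _ _)) as Hsb.
  set (b := SApp (BStar t) a) in *.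
  destruct n as [|j].
  - rewrite (timewarp_0 _ (star_timewarp f Hf)). symmetry. exact (d_zero _ _ Ia Ha Hn).
  - assert (Habove : d b <> Om -> wle (Fin (S j)) (f (Sw (d b)))).
    { intro Hfin. rewrite <- Hn, <- (d_suc b Ha Hsb), (proj1 Hext _ Htsb).
      apply d_star_above; [assumption.. | split; [apply wle_Om | exact Hfin]]. }
    apply wle_antisym.
    + destruct (d b) as [k|] eqn:Hk; [|apply wle_Om].
      apply star_le; [exact Hf|]. rewrite pw_Fin. intro Hle.
      pose proof (wle_trans _ _ _ (Habove ltac:(discriminate)) Hle). simpl in *; lia.
    + apply star_ge; [exact Hf|]. apply wlt_Fin_S.
      rewrite <- Hn, (proj1 Hext _ Htb). apply d_star_below; [assumption.. | |];
        rewrite Hn; split; simpl; (lia || discriminate || exact I).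
Qed.

Lemma lastw_Om_of_star : (exists a, In (SApp (BStar t) a) D) ->
  d (SLast (BStar t)) = Om -> lastw f = Om.
Proof.
  destruct Hd as (_ & _ & _ & _ & _ & _ & _ & _ & _ & _ & _ & d_star_last).
  intros [a Ha] Hlast.
  pose proof (Hs _ _ Ha (ld_star1 _ _)) as Htb.
  apply (proj2 Hext); [exists (SApp (BStar t) a); exact Htb|].
  apply d_star_last; [| | exact Hlast].
  - exact (Hs _ _ (Hs _ _ Ha (ld_last _ _)) (ld_app _ _)).
  - exact (Hs _ _ (Hs _ _ Htb (ld_last _ _)) (ld_app _ _)).
Qed.

Lemma star_extends_Om a : In (SApp (BStar t) a) D -> d a = Om ->
  star f Om = d (SApp (BStar t) a).
Proof.
  intros Ha Hom.
  destruct Hd as (_ & _ & d_suc & d_last & d_last_Om & _ & _ & _ & _ & _ & d_star_above & _).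
  pose proof (Hs _ _ Ha (ld_app _ _)) as Ia.
  pose proof (Hs _ _ Ha (ld_star2 _ _)) as Htsb.
  pose proof (Hs _ _ Htsb (ld_app _ _)) as Hsb.
  pose proof (Hs _ _ Ha (ld_last _ _)) as Hbl.
  pose proof (Hs _ _ Hbl (ld_app _ _)) as Hl.
  assert (Hsame : d (SApp (BStar t) (SLast (BStar t))) = d (SApp (BStar t) a)).
  { apply (d_last _ _ Ha Ia Hl Hbl). rewrite Hom. apply wle_Om. }
  destruct (d (SLast (BStar t))) as [n|] eqn:Hn.
  - set (b := SApp (BStar t) a) in *.
    apply wle_antisym.
    + destruct (d b) as [k|] eqn:Hk; [|apply wle_Om].
      assert (Hjump : f (Fin (S k)) = Om).
      { apply Om_wle_eq. rewrite <- Hom. change (Fin (S k)) with (Sw (Fin k)).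
        rewrite <- Hk, <- (d_suc b Ha Hsb), (proj1 Hext _ Htsb).
        apply d_star_above; [assumption.. |]. fold b; rewrite Hk. split; [exact I | discriminate]. }
      apply timewarp_Om_le; [exact (star_timewarp f Hf)|]. intro m.
      apply star_le; [exact Hf|]. rewrite Hjump, pw_Fin. exact (fun H => H).
    + rewrite <- Hsame, <- (star_extends_Fin _ n Hbl Hn).
      apply timewarp_mono, wle_Om. exact (star_timewarp f Hf).
  - rewrite <- Hsame, (d_last_Om _ Hl Hbl Hn).
    apply star_Om; [exact Hf|]. apply lastw_Om_of_star; [exists a; exact Ha | exact Hn].
Qed.

Lemma star_strongly_extends : strongly_extends (star f) (BStar t) D d.
Proof.
  split.
  - intros a Ha. destruct (d a) as [n|] eqn:Hn.
    + exact (star_extends_Fin a n Ha Hn).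
    + exact (star_extends_Om a Ha Hn).
  - intros Hex Hlast. apply lastw_star; [exact Hf|]. exact (lastw_Om_of_star Hex Hlast).
Qed.

End Star.
End Diagram.

Lemma eval_timewarp_strongly_extends D d v t :
  saturated D -> diagram D d -> (forall x, timewarp (v x)) ->
  (forall x, occurs x t -> strongly_extends (v x) (BVar x) D d) ->
  timewarp (eval v (emb t)) /\ strongly_extends (eval v (emb t)) t D d.
Proof.
  intros Hs Hd Hv. induction t as [x | t IHt u IHu | t IHt |]; simpl; intro Hocc.
  - split; [apply Hv | apply Hocc; reflexivity].
  - destruct (IHt (fun x Hx => Hocc x (or_introl Hx))) as [Tt Et].
    destruct (IHu (fun x Hx => Hocc x (or_intror Hx))) as [Tu Eu].
    split; [apply timewarp_comp | apply comp_strongly_extends]; assumption.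
  - destruct (IHt Hocc) as [Tt Et].
    split; [apply star_timewarp | apply star_strongly_extends]; assumption.
  - split; [apply timewarp_id | apply one_strongly_extends]; assumption.
Qed.

Theorem lemma3p8 (Delta : list sample) (delta : sample -> wp) (t : bterm)
  (v : nat -> wp -> wp) :
  saturated Delta ->
  diagram Delta delta ->
  (forall x, timewarp (v x)) ->
  (forall x, occurs x t -> strongly_extends (v x) (BVar x) Delta delta) ->
  strongly_extends (eval v (emb t)) t Delta delta.
Proof.
  intros Hs Hd Hv Hocc.
  exact (proj2 (eval_timewarp_strongly_extends Delta delta v t Hs Hd Hv Hocc)).
Qed.
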